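(* Let $k\geq3$, $A=\{0,1,\dots,k-1\}$, $n=k-1$ and let $T\colon A^{n^2}\to A$ be given by $T(x_{1,1},\dots,x_{1,n},\dots,x_{n,1},\dots,x_{n,n})=1$ if $x_{i,j}=i$ for all $i,j$ or $x_{i,j}=j$ for all $i,j$, and $0$ otherwise. Then \[\langle\{T\}\rangle^{(n)}=J_n(A)\cup\{c^n_0\}\cup F,\] where $c^n_0$ is the $n$-ary constant zero function, $J_n(A)$ the set of $n$-ary projections, and $F$ is the set of those $n$-ary functions in $\langle\{T\}\rangle$ which map exactly one $n$-tuple to $1$ and every other $n$-tuple to $0$.
   Context: $\langle\{T\}\rangle$ denotes the clone generated by $T$ (all term operations of positive arity of the algebra $(A;T)$, including projections) and $\langle\{T\}\rangle^{(n)}$ its $n$-ary members. *)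

From mathcomp Require Import all_boot.
Set Implicit Arguments. Unset Strict Implicit. Unset Printing Implicit Defensive.

(* Universe A = {0,...,k-1} with k = n.+1, i.e. A = 'I_n.+1 and n = k-1. *)

(* The n^2-ary operation T; its variables x_{i,j} (1 <= i,j <= n) are indexed by
   pairs (i,j) : 'I_n * 'I_n (0-based), so the paper's value "i" is i.+1. *)
Definition T (n : nat) (x : {ffun 'I_n * 'I_n -> 'I_n.+1}) : 'I_n.+1 :=
  if [forall ij : 'I_n * 'I_n, x ij == inord ij.1.+1]
     || [forall ij : 'I_n * 'I_n, x ij == inord ij.2.+1]
  then inord 1 else ord0.

Inductive term_op (n m : nat) : ({ffun 'I_m -> 'I_n.+1} -> 'I_n.+1) -> Prop :=
| TProj (i : 'I_m) : term_op (fun x => x i)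
| TComp (g : 'I_n * 'I_n -> {ffun 'I_m -> 'I_n.+1} -> 'I_n.+1) :
    (forall ij, term_op (g ij)) ->
    term_op (fun x => T [ffun ij => g ij x]).

Definition in_clone (n m : nat) (f : {ffun 'I_m -> 'I_n.+1} -> 'I_n.+1) : Prop :=
  exists g, @term_op n m g /\ forall x, f x = g x.
Arguments in_clone n m f : clear implicits.

From mathcomp Require Import all_boot.
Set Implicit Arguments. Unset Strict Implicit. Unset Printing Implicit Defensive.

(* Every n-ary term operation of T is a projection, or is {0,1}-valued and
   takes the value 1 at most once; this class contains the projections and is
   closed under composition with T.  If T(g_ij(x)) = 1, the matrix g_ij(x) is
   the row pattern i or the column pattern j.  All g_ij taking a value >= 2 at
   x are then projections x_(p ij), and in a row pattern i |-> p(i,0) is a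
   permutation of the coordinates, so the pattern determines x (the same for
   columns); the entry g_00 = 1 is either a projection too or already pins x
   down.  A row pattern and a column pattern cannot both occur, since the
   permutations force incompatible values on the same coordinate.  Conversely,
   the constant 0 is T applied to a constant matrix, which is never a pattern
   when n >= 2. *)

Section CloneOfT.

Variable n : nat.
Hypothesis n_gt1 : 1 < n.

Local Notation point := {ffun 'I_n -> 'I_n.+1}.
Local Notation op := (point -> 'I_n.+1).
Local Notation o0 := (Ordinal (ltnW n_gt1)).
Local Notation o1 := (Ordinal n_gt1).

Definition is_proj (g : op) := exists k, forall x, g x = x k.

Definition zero_or_point_indicator (g : op) :=
  (forall x, g x <= 1) /\ (forall x y, g x = inord 1 -> g y = inord 1 -> x = y).

Definition proj_or_indicator (g : op) := is_proj g \/ zero_or_point_indicator g.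

Lemma inord_succK (i : 'I_n) : (inord i.+1 : 'I_n.+1) = i.+1 :> nat.
Proof. by rewrite inordK // ltnS. Qed.

Lemma inord_succ_inj (i j : 'I_n) : (inord i.+1 : 'I_n.+1) = inord j.+1 -> i = j.
Proof. by move/(congr1 val); rewrite /= !inord_succK => -[] /val_inj. Qed.

Lemma ord_le1_neq1 (a : 'I_n.+1) : a <= 1 -> a != inord 1 -> a = ord0.
Proof.
case: a => -[|[|m]] lt_a //= _ a_neq1; first exact: val_inj.
by case/eqP: a_neq1; apply: val_inj; rewrite /= inordK.
Qed.

Lemma proj_of_gt1 (g : op) z : proj_or_indicator g -> 1 < g z -> is_proj g.
Proof. by case=> // -[g_le1 _]; rewrite ltnNge g_le1. Qed.

Lemma proj_family_bij (p : 'I_n -> 'I_n) (x : point) :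
  (forall i, x (p i) = inord i.+1) -> bijective p.
Proof.
move=> xp; apply: injF_bij => i j eq_p.
by apply: inord_succ_inj; rewrite /= -!xp eq_p.
Qed.

Lemma proj_family_eq (p : 'I_n -> 'I_n) (x y : point) :
  (forall i, x (p i) = inord i.+1) -> (forall i, y (p i) = inord i.+1) -> x = y.
Proof.
move=> xp yp; have [q _ qK] := proj_family_bij xp.
by apply/ffunP => k; rewrite -[k]qK xp yp.
Qed.

Lemma proj_or_indicator_family_eq (h : 'I_n -> op) (x y : point) :
  (forall i, proj_or_indicator (h i)) ->
  (forall i, h i x = inord i.+1) -> (forall i, h i y = inord i.+1) -> x = y.
Proof.
move=> h_tame hx hy.
case: (h_tame o0) => [h0_proj | [_ h0_one]]; last by apply: h0_one; rewrite ?hx ?hy.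
have /fin_all_exists[p hp] i : exists k, forall z, h i z = z k.
  case: (posnP i) => [i0 | i_gt0]; first by rewrite (_ : i = o0) //; apply: val_inj.
  by apply: (proj_of_gt1 (z := x)); rewrite // hx inord_succK ltnS.
by apply: (proj_family_eq (p := p)) => i; rewrite -hp.
Qed.

Lemma rows_cols_exclusive (g : 'I_n * 'I_n -> op) (x y : point) :
  (forall ij, proj_or_indicator (g ij)) ->
  (forall i j, g (i, j) x = inord i.+1) ->
  (forall i j, g (i, j) y = inord j.+1) -> False.
Proof.
move=> g_tame gx gy.
have /fin_all_exists[p hp] i : exists k, forall z, g (i, o1) z = z k.
  by apply: (proj_of_gt1 (z := y)); rewrite // gy inord_succK.
have [q _ qK] : bijective p by apply: (proj_family_bij (x := x)) => i; rewrite -hp.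
have [k hk] : is_proj (g (o1, o0)).
  by apply: (proj_of_gt1 (z := x)); rewrite // gx inord_succK.
by have := gy o1 o0; rewrite hk -(qK k) -hp gy => /inord_succ_inj/(congr1 val).
Qed.

Lemma T_le1 (v : {ffun 'I_n * 'I_n -> 'I_n.+1}) : T v <= 1.
Proof. by rewrite /T; case: ifP => // _; rewrite inordK // ltnS ltnW. Qed.

Lemma T_eq1 (w : 'I_n * 'I_n -> 'I_n.+1) : T [ffun ij => w ij] = inord 1 ->
  (forall i j, w (i, j) = inord i.+1) \/ (forall i j, w (i, j) = inord j.+1).
Proof.
rewrite /T; case: ifP => [/orP[]/forallP w_eq _ | _ /(congr1 (@nat_of_ord _))].
- by left=> i j; have /eqP := w_eq (i, j); rewrite ffunE.
- by right=> i j; have /eqP := w_eq (i, j); rewrite ffunE.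
- by rewrite inordK // ltnS ltnW.
Qed.

Lemma T_cst (a : 'I_n.+1) : T [ffun _ => a] = ord0.
Proof.
rewrite /T; case: ifP => // /orP[]/forallP a_eq.
- have /eqP := a_eq (o0, o0); have /eqP := a_eq (o1, o0); rewrite !ffunE => ->.
  by move/inord_succ_inj/(congr1 val).
- have /eqP := a_eq (o0, o0); have /eqP := a_eq (o0, o1); rewrite !ffunE => ->.
  by move/inord_succ_inj/(congr1 val).
Qed.

Lemma proj_or_indicator_T (g : 'I_n * 'I_n -> op) :
  (forall ij, proj_or_indicator (g ij)) ->
  proj_or_indicator (fun x => T [ffun ij => g ij x]).
Proof.
move=> g_tame; right; split=> [x | x y]; first exact: T_le1.
move=> /T_eq1[] gx /T_eq1[] gy.
- by apply: (proj_or_indicator_family_eq (h := fun i => g (i, o0))).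
- by case: (rows_cols_exclusive g_tame gx gy).
- by case: (rows_cols_exclusive g_tame gy gx).
- by apply: (proj_or_indicator_family_eq (h := fun j => g (o0, j))).
Qed.

Lemma term_op_proj_or_indicator (g : op) : term_op g -> proj_or_indicator g.
Proof.
by elim=> [i | {}g _ IH]; [left; exists i | exact: proj_or_indicator_T].
Qed.

Lemma zero_or_point_indicator_cases (g : op) : zero_or_point_indicator g ->
  (forall x, g x = ord0) \/
  exists x0, g x0 = inord 1 /\ forall x, x != x0 -> g x = ord0.
Proof.
move=> [g_le1 g_one]; case: (pickP (fun x => g x == inord 1)) => [x0 /eqP gx0 | no1].
- right; exists x0; split=> // x x_neq; apply: ord_le1_neq1 (g_le1 x) _.
  by apply: contra_neq x_neq => gx1; apply: g_one.
- by left=> x; apply: ord_le1_neq1 (g_le1 x) _; rewrite no1.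
Qed.

Lemma in_clone_zero (f : op) : (forall x, f x = ord0) -> in_clone n n f.
Proof.
move=> f0; exists (fun x => T [ffun _ => x o0]); split.
- by apply: (@TComp n n (fun _ x => x o0)) => _; apply: TProj.
- by move=> x; rewrite f0 T_cst.
Qed.

End CloneOfT.

Theorem lemma3p7 (n : nat) (hn : 2 <= n)
    (f : {ffun 'I_n -> 'I_n.+1} -> 'I_n.+1) :
  in_clone n n f <->
  ((exists i : 'I_n, forall x, f x = x i)
   \/ (forall x, f x = ord0)
   \/ (in_clone n n f /\
       exists x0, f x0 = inord 1 /\ forall x, x != x0 -> f x = ord0)).
Proof.
split=> [f_clone | [[i f_i] | [f0 | []//]]].
- have [g [g_term f_g]] := f_clone.
  case: (term_op_proj_or_indicator hn g_term) => [[k g_k] | ].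
    by left; exists k => x; rewrite f_g.
  case/zero_or_point_indicator_cases => [g0 | [x0 [gx0 g_else]]].
    by right; left=> x; rewrite f_g.
  right; right; split=> //; exists x0.
  by split=> [| x x_neq]; rewrite f_g ?gx0 ?g_else.
- by exists (fun x => x i); split=> //; apply: TProj.
- exact: in_clone_zero.
Qed.
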